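(* Fix $\beta>2$. Let $G_\beta(x)=\frac1\beta\log x-\frac32x$ for $x>0$, $l_\beta=2/(3\beta)$, $g_\beta=G_\beta(l_\beta)$. For $y<g_\beta$ let $H_\beta(y)<l_\beta<K_\beta(y)$ be the two solutions of $G_\beta(x)=y$, and set $H_\beta(g_\beta)=K_\beta(g_\beta)=l_\beta$. For $k=1,2$ let $S_\beta^{(k)}:(-\infty,g_\beta]\to\mathbb{R}$, $S_\beta^{(k)}(y)=kH_\beta(y)+K_\beta(y)$. Then: (1) $S_\beta^{(1)}$ is decreasing on $(-\infty,g_\beta]$; (2) there exists $\tilde g_\beta<g_\beta$ such that $S_\beta^{(2)}$ is decreasing on $(-\infty,\tilde g_\beta)$ and increasing on $(\tilde g_\beta,g_\beta]$.
   Context: $G_\beta$ is increasing on $(0,l_\beta)$, decreasing on $(l_\beta,\infty)$, and tends to $-\infty$ at $0$ and at $\infty$, so $H_\beta$ and $K_\beta$ are well defined, continuous, $H_\beta$ increasing and $K_\beta$ decreasing on $(-\infty,g_\beta]$. *)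

From mathcomp Require Import all_boot all_order all_algebra.
From mathcomp Require Import all_classical all_reals all_analysis.
Set Implicit Arguments. Unset Strict Implicit. Unset Printing Implicit Defensive.
Import Order.TTheory GRing.Theory Num.Theory.
Local Open Scope ring_scope.

Definition Gb {R : realType} (b x : R) : R := b^-1 * ln x - 3 / 2 * x.
Definition lb {R : realType} (b : R) : R := 2 / (3 * b).
Definition gb {R : realType} (b : R) : R := Gb b (lb b).

(* Two points h < k on one level set of G_beta satisfy k - h = l_beta ln t with
   t = k / h, hence m h + k = l_beta Sratio m t with
   Sratio m t = ln t (t + m) / (t - 1).  Along the level curve the ratio
   t = K / H decreases strictly from +oo to 1 as y increases to g_beta, so S^(m)
   inherits the monotonicity of Sratio m, reversed.  The derivative of Sratio m
   has the sign of Sratio_num m, which vanishes at t = 1 and has derivative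
   (t - 1)(t - m) / t^2: for m = 1 it stays positive, for m = 2 it has a single
   zero r in [2, 4], and tilde g_beta is the level where K / H = r.  At
   y = g_beta, S^(m) = (m + 1) l_beta, and the comparison with Sratio m near
   t = 1 is the sign of Sratio_gap m, whose derivative has the sign of
   (t - 1)(t - m^2). *)

From mathcomp Require Import all_boot all_order all_algebra.
From mathcomp Require Import all_classical all_reals all_analysis.
From mathcomp Require Import ring lra.
Import Order.TTheory GRing.Theory Num.Theory.
Local Open Scope ring_scope.

Section derive_sign.
Context {R : realType} {f df : R -> R} {x y : R}.
Hypothesis xy : x < y.
Hypothesis f_df : forall z, z \in `[x, y] -> is_derive z 1 f (df z).

Lemma derive_gt0_lt : {in `]x, y[, forall z, 0 < df z} -> f x < f y.
Proof.
move=> df_gt0.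
have f'E z : z \in `[x, y] -> derive1 f z = df z.
  by move=> /f_df fz; rewrite derive1E derive_val.
apply: (@gtr0_derive1_lt_cc _ f x y); rewrite ?bound_itvE ?ltW //.
- by move=> z /subset_itv_oo_cc /f_df fz; apply: ex_derive.
- by move=> z zxy; rewrite f'E ?df_gt0 // subset_itv_oo_cc.
- by apply: derivable_within_continuous => z /f_df fz; apply: ex_derive.
Qed.

End derive_sign.

Lemma derive_lt0_gt {R : realType} {f df : R -> R} {x y : R} : x < y ->
  (forall z, z \in `[x, y] -> is_derive z 1 f (df z)) ->
  {in `]x, y[, forall z, df z < 0} -> f y < f x.
Proof.
move=> xy f_df df_lt0; rewrite -ltrN2.
apply: (@derive_gt0_lt _ (fun z => - f z) (fun z => - df z)) => //.
  by move=> z /f_df; apply: is_deriveN.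
by move=> z /df_lt0; rewrite oppr_gt0.
Qed.

Lemma is_derive_ext {R : realType} (f g : R -> R) (x df dg : R) :
  is_derive x 1 f df -> f =1 g -> df = dg -> is_derive x 1 g dg.
Proof. by move=> fx /funext <- <-. Qed.

Section ratio_functions.
Context {R : realType}.
Implicit Types (k t : R).

Definition Sratio k t := ln t * (t + k) / (t - 1).
Definition Sratio_num k t := t + (k - 1) - k / t - (k + 1) * ln t.
Definition Sratio_gap k t := ln t - (k + 1) * (t - 1) / (t + k).

Lemma is_derive_Sratio k t : 1 < t ->
  is_derive t 1 (Sratio k) (Sratio_num k t / (t - 1) ^+ 2).
Proof.
move=> t1; have t0 : 0 < t by apply: lt_trans t1.
have t1' : t - 1 != 0 by rewrite subr_eq0 gt_eqF.
have hV := @is_deriveV R (id - cst 1) t (1 - 0) 1 t1'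
  (is_deriveB (is_derive_id t 1) (is_derive_cst (1 : R) t 1)).
have h := is_deriveM (is_deriveM (is_derive1_ln t0)
  (is_deriveD (is_derive_id t 1) (is_derive_cst k t 1))) hV.
apply: (@is_derive_ext _ _ (Sratio k) _ _ _ h) => [u|]; first reflexivity.
rewrite /Sratio_num !fctE /GRing.scale /=.
by field; rewrite t1' lt0r_neq0.
Qed.

Lemma is_derive_Sratio_num k t : 0 < t ->
  is_derive t 1 (Sratio_num k) ((t - 1) * (t - k) / t ^+ 2).
Proof.
move=> t0; have tn0 : t != 0 by rewrite lt0r_neq0.
have hV := @is_deriveV R id t 1 1 tn0 (is_derive_id t 1).
have h := is_deriveB (is_deriveB (is_deriveD (is_derive_id t 1)
  (is_derive_cst (k - 1) t 1)) (is_deriveZ k hV))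
  (is_deriveZ (k + 1) (is_derive1_ln t0)).
apply: (@is_derive_ext _ _ (Sratio_num k) _ _ _ h) => [u|]; first reflexivity.
by rewrite /GRing.scale /=; field.
Qed.

Lemma is_derive_Sratio_gap k t : 0 < t -> 0 <= k ->
  is_derive t 1 (Sratio_gap k) ((t - 1) * (t - k ^+ 2) / (t * (t + k) ^+ 2)).
Proof.
move=> t0 k0; have tk0 : t + k != 0 by rewrite lt0r_neq0 ?ltr_wpDr.
have hV := @is_deriveV R (id + cst k) t (1 + 0) 1 tk0
  (is_deriveD (is_derive_id t 1) (is_derive_cst k t 1)).
have h := is_deriveB (is_derive1_ln t0) (is_deriveZ (k + 1)
  (is_deriveM (is_deriveB (is_derive_id t 1) (is_derive_cst (1 : R) t 1)) hV)).
apply: (@is_derive_ext _ _ (Sratio_gap k) _ _ _ h) => [u|].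
  by rewrite /Sratio_gap -mulrA.
rewrite !fctE /GRing.scale /=.
by field; rewrite tk0 lt0r_neq0.
Qed.

Lemma Sratio_num1 k : Sratio_num k 1 = 0.
Proof. by rewrite /Sratio_num ln1 divr1; ring. Qed.

Lemma Sratio_num_increasing k x y : 1 <= x -> k <= x -> x < y ->
  Sratio_num k x < Sratio_num k y.
Proof.
move=> x1 kx xy; apply: (derive_gt0_lt (f := Sratio_num k)
  (df := fun z => (z - 1) * (z - k) / z ^+ 2) xy) => z; rewrite in_itv /=.
  by move=> /andP[xz _]; apply: is_derive_Sratio_num; lra.
by move=> /andP[xz _]; rewrite divr_gt0 ?exprn_gt0 ?mulr_gt0 //; lra.
Qed.

Lemma Sratio_num_decreasing k x y : 1 <= x -> x < y -> y <= k ->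
  Sratio_num k y < Sratio_num k x.
Proof.
move=> x1 xy yk; apply: (derive_lt0_gt (f := Sratio_num k)
  (df := fun z => (z - 1) * (z - k) / z ^+ 2) xy) => z; rewrite in_itv /=.
  by move=> /andP[xz _]; apply: is_derive_Sratio_num; lra.
move=> /andP[xz zy]; have z1 : 0 < z - 1 by lra.
by rewrite pmulr_llt0 ?invr_gt0 ?exprn_gt0 ?pmulr_rlt0 //; lra.
Qed.

Lemma Sratio_gap1 k : Sratio_gap k 1 = 0.
Proof. by rewrite /Sratio_gap ln1 subrr mulr0 mul0r subrr. Qed.

Lemma Sratio_gap_gt0 k t : 0 <= k <= 1 -> 1 < t -> 0 < Sratio_gap k t.
Proof.
move=> /andP[k0 k1] t1; rewrite -(Sratio_gap1 k).
apply: (derive_gt0_lt (f := Sratio_gap k)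
  (df := fun z => (z - 1) * (z - k ^+ 2) / (z * (z + k) ^+ 2)) t1) => z.
  by rewrite in_itv /= => /andP[z1 _]; apply: is_derive_Sratio_gap; lra.
rewrite in_itv /= => /andP[z1 _].
by rewrite divr_gt0 ?mulr_gt0 ?exprn_gt0 //; nra.
Qed.

Lemma Sratio_gap_lt0 k t : 1 <= k -> 1 < t -> t <= k ^+ 2 -> Sratio_gap k t < 0.
Proof.
move=> k1 t1 tk; rewrite -(Sratio_gap1 k).
apply: (derive_lt0_gt (f := Sratio_gap k)
  (df := fun z => (z - 1) * (z - k ^+ 2) / (z * (z + k) ^+ 2)) t1) => z.
  by rewrite in_itv /= => /andP[z1 _]; apply: is_derive_Sratio_gap; lra.
rewrite in_itv /= => /andP[z1 zt]; have z10 : 0 < z - 1 by lra.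
by rewrite pmulr_llt0 ?invr_gt0 ?mulr_gt0 ?exprn_gt0 ?pmulr_rlt0 //; lra.
Qed.

Lemma Sratio_sub k t : 0 <= k -> 1 < t ->
  Sratio k t - (k + 1) = (t + k) / (t - 1) * Sratio_gap k t.
Proof.
move=> k0 t1; rewrite /Sratio /Sratio_gap.
have t1' : t - 1 != 0 by rewrite subr_eq0 gt_eqF.
have tk : t + k != 0 by rewrite lt0r_neq0 //; lra.
by field; rewrite t1' tk.
Qed.

Lemma Sratio_gt_succ k t : 0 <= k <= 1 -> 1 < t -> k + 1 < Sratio k t.
Proof.
move=> /[dup] /andP[k0 _] k01 t1; rewrite -subr_gt0 Sratio_sub //.
by rewrite mulr_gt0 ?Sratio_gap_gt0 ?divr_gt0 //; lra.
Qed.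

Lemma Sratio_lt_succ k t : 1 <= k -> 1 < t -> t <= k ^+ 2 -> Sratio k t < k + 1.
Proof.
move=> k1 t1 tk; rewrite -subr_lt0 Sratio_sub //; last by lra.
by rewrite pmulr_rlt0 ?Sratio_gap_lt0 ?divr_gt0 //; lra.
Qed.

Lemma Sratio_lt_of_num_gt0 k u v : 1 < u -> u < v ->
  {in `]u, v[, forall z, 0 < Sratio_num k z} -> Sratio k u < Sratio k v.
Proof.
move=> u1 uv num_gt0; apply: (derive_gt0_lt (f := Sratio k)
  (df := fun z => Sratio_num k z / (z - 1) ^+ 2) uv) => z; rewrite in_itv /=.
  by move=> /andP[uz _]; apply: is_derive_Sratio; lra.
by move=> zuv; rewrite divr_gt0 ?num_gt0 ?in_itv //= exprn_gt0 //; move: zuv; lra.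
Qed.

Lemma Sratio_gt_of_num_lt0 k u v : 1 < u -> u < v ->
  {in `]u, v[, forall z, Sratio_num k z < 0} -> Sratio k v < Sratio k u.
Proof.
move=> u1 uv num_lt0; apply: (derive_lt0_gt (f := Sratio k)
  (df := fun z => Sratio_num k z / (z - 1) ^+ 2) uv) => z; rewrite in_itv /=.
  by move=> /andP[uz _]; apply: is_derive_Sratio; lra.
move=> zuv; rewrite pmulr_llt0 ?num_lt0 ?invr_gt0 ?exprn_gt0 ?in_itv //=.
by move: zuv; lra.
Qed.

Lemma Sratio_num_gt0 k t : k <= 1 -> 1 < t -> 0 < Sratio_num k t.
Proof. by move=> k1 t1; rewrite -(Sratio_num1 k) Sratio_num_increasing. Qed.

Lemma Sratio_num_lt0_below_root k r t : 1 <= k <= r -> Sratio_num k r = 0 ->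
  1 < t < r -> Sratio_num k t < 0.
Proof.
move=> /andP[k1 kr] num_r /andP[t1 tr]; have [tk|kt] := leP t k.
  by rewrite -(Sratio_num1 k) Sratio_num_decreasing.
by rewrite -num_r Sratio_num_increasing //; lra.
Qed.

Lemma Sratio_num_gt0_above_root k r t : 1 <= k <= r -> Sratio_num k r = 0 ->
  r < t -> 0 < Sratio_num k t.
Proof.
move=> /andP[k1 kr] num_r rt.
by rewrite -num_r Sratio_num_increasing //; lra.
Qed.

Lemma Sratio_num2_root : exists2 r : R, r \in `[2, 4] & Sratio_num 2 r = 0.
Proof.
have num2 : Sratio_num 2 (2 : R) < 0.
  by rewrite -(Sratio_num1 2) Sratio_num_decreasing //; lra.
have num4 : 0 < Sratio_num 2 (4 : R).
  (* this is ln 4 < 3/2 *)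
  have : Sratio_gap 2 (4 : R) < 0 by apply: Sratio_gap_lt0; rewrite ?expr2; lra.
  rewrite /Sratio_num /Sratio_gap.
  have -> : (2 + 1) * (4 - 1) / (4 + 2) = 3 / 2 :> R by field.
  have -> : 2 / 4 = 1 / 2 :> R by field.
  lra.
apply: (@IVT R (Sratio_num 2) 2 4 0); first by lra.
  apply: derivable_within_continuous => z; rewrite in_itv /= => /andP[z2 _].
  have z0 : 0 < z by lra.
  by have num' := is_derive_Sratio_num 2 z z0; apply: ex_derive.
have n24 := ltW (lt_trans num2 num4).
by rewrite min_l // max_r // (ltW num2) (ltW num4).
Qed.

End ratio_functions.

Section level_sets.
Context {R : realType} {b : R}.
Hypothesis b_gt0 : 0 < b.
Implicit Types (x h k s m : R).

Lemma lb_gt0 : 0 < lb b.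
Proof. by rewrite divr_gt0 // mulr_gt0. Qed.

Lemma invr_lb : b^-1 = 3 / 2 * lb b.
Proof. by rewrite /lb; field; rewrite lt0r_neq0. Qed.

Lemma is_derive_Gb x : 0 < x -> is_derive x 1 (Gb b) (3 / 2 * (lb b - x) / x).
Proof.
move=> x0; have h := is_deriveB (is_deriveZ b^-1 (is_derive1_ln x0))
  (is_deriveZ (3 / 2 : R) (is_derive_id x 1)).
apply: (is_derive_eq h); rewrite /GRing.scale /= invr_lb.
by field; rewrite lt0r_neq0.
Qed.

Lemma Gb_increasing : {in `]0, lb b] &, {homo Gb b : x y / x < y}}.
Proof.
move=> x y; rewrite !in_itv /= => /andP[x0 _] /andP[_ yl] xy.
apply: (derive_gt0_lt (f := Gb b) (df := fun z => 3 / 2 * (lb b - z) / z) xy).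
  by move=> z; rewrite in_itv /= => /andP[xz _]; apply: is_derive_Gb; lra.
move=> z; rewrite in_itv /= => /andP[xz zy].
by rewrite divr_gt0 ?mulr_gt0 //; lra.
Qed.

Lemma Gb_decreasing : {in `[lb b, +oo[ &, {homo Gb b : x y /~ x < y}}.
Proof.
have l0 := lb_gt0; move=> x y; rewrite !in_itv /= !andbT => _ ly yx.
apply: (derive_lt0_gt (f := Gb b) (df := fun z => 3 / 2 * (lb b - z) / z) yx).
  by move=> z; rewrite in_itv /= => /andP[yz _]; apply: is_derive_Gb; lra.
move=> z; rewrite in_itv /= => /andP[yz zx].
by rewrite pmulr_llt0 ?invr_gt0 ?pmulr_rlt0 //; lra.
Qed.

Lemma Gb_le_mono : {in `]0, lb b] &, {mono Gb b : x y / x <= y}}.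
Proof. exact: le_mono_in Gb_increasing. Qed.

Lemma Gb_le_nmono : {in `[lb b, +oo[ &, {mono Gb b : x y /~ x <= y}}.
Proof. exact: le_nmono_in Gb_decreasing. Qed.

Lemma Gb_eq_sub h k : 0 < h -> 0 < k -> Gb b h = Gb b k ->
  k - h = lb b * ln (k / h).
Proof.
move=> h0 k0; by rewrite ln_div ?posrE // /Gb invr_lb => e; nra.
Qed.

Lemma Gb_eq_weighted_sum m h k : 0 < h -> h < k -> Gb b h = Gb b k ->
  m * h + k = lb b * Sratio m (k / h).
Proof.
move=> h0 hk e; have k0 : 0 < k by apply: lt_trans hk.
rewrite /Sratio !mulrA -(Gb_eq_sub _ _ h0 k0 e).
have kh : k + -1 * h != 0 by rewrite mulN1r subr_eq0 gt_eqF.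
by field; rewrite kh lt0r_neq0.
Qed.

Lemma Gb_level_pair_of_ratio s : 1 < s -> exists h,
  [/\ 0 < h, h < lb b, lb b < s * h & Gb b (s * h) = Gb b h].
Proof.
move=> s1; have s0 : 0 < s by apply: lt_trans s1.
have s10 : 0 < s - 1 by rewrite subr_gt0.
have l0 := lb_gt0; have lns0 : 0 < ln s by rewrite ln_gt0.
(* the case k = 0 of these two lemmas gives 1 - 1/s < ln s < s - 1 *)
have := @Sratio_gap_gt0 R 0 s; rewrite lexx ler01 => /(_ isT s1).
rewrite /Sratio_gap addr0 add0r mul1r subr_gt0 ltr_pdivrMr // => ln_lower.
have := @Sratio_num_gt0 R 0 s ler01 s1.
rewrite /Sratio_num mul0r add0r subr0 => ln_upper.
have h0 : 0 < lb b * ln s / (s - 1) by rewrite divr_gt0 // mulr_gt0.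
exists (lb b * ln s / (s - 1)); split => //.
- by rewrite -mulrA gtr_pMr // ltr_pdivrMr // mul1r; lra.
- by rewrite mulrCA -mulrA ltr_pMr // mulrA ltr_pdivlMr // mul1r; lra.
- rewrite /Gb lnM ?posrE // invr_lb.
  by field; rewrite lt0r_neq0.
Qed.

End level_sets.

Section level_curve.
Context {R : realType} {b : R} {H K : R -> R}.
Hypothesis b_gt0 : 0 < b.
Hypothesis HK_level : forall y, y < gb b ->
  [/\ 0 < H y, H y < lb b, lb b < K y, Gb b (H y) = y & Gb b (K y) = y].
Implicit Types (x y s m : R).

Lemma level_ratio_gt1 y : y < gb b -> 1 < K y / H y.
Proof.
by case/HK_level=> H0 Hl lK _ _; rewrite ltr_pdivlMr // mul1r (lt_trans Hl).
Qed.

Lemma level_ratio_decreasing x y : x < y -> y < gb b -> K y / H y < K x / H x.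
Proof.
move=> xy yg; have xg := lt_trans xy yg.
have [Hx0 Hxl lKx GHx GKx] := HK_level x xg.
have [Hy0 Hyl lKy GHy GKy] := HK_level _ yg.
have Hxy : H x < H y.
  rewrite -(leW_mono_in (Gb_le_mono b_gt0)) ?in_itv /= ?Hx0 ?Hy0 ?ltW //.
  by rewrite GHx GHy.
have Kyx : K y < K x.
  rewrite -(leW_nmono_in (Gb_le_nmono b_gt0)) ?in_itv /= ?ltW //.
  by rewrite GKx GKy.
have Ky0 : 0 < K y by apply: lt_trans lKy; apply: lt_trans Hy0 Hyl.
rewrite ltr_pdivrMr // mulrAC ltr_pdivlMr //; nra.
Qed.

Lemma level_ratio_surjective s : 1 < s -> exists2 y, y < gb b & K y / H y = s.
Proof.
move=> s1; have [h [h0 hl lsh Gsh]] := Gb_level_pair_of_ratio b_gt0 _ s1.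
have yg : Gb b h < gb b.
  by apply: Gb_increasing; rewrite ?in_itv /= ?h0 ?lexx ?ltW // lb_gt0.
exists (Gb b h) => //; have [H0 Hl lK GH GK] := HK_level _ yg.
have -> : H (Gb b h) = h.
  by apply: (inc_inj_in (Gb_le_mono b_gt0)); rewrite ?in_itv /= ?H0 ?h0 ?ltW.
have -> : K (Gb b h) = s * h.
  apply: (dec_inj_in (Gb_le_nmono b_gt0)); rewrite ?in_itv /= ?ltW //.
  by rewrite GK Gsh.
by rewrite mulfK // gt_eqF.
Qed.

Lemma weighted_sum_Sratio m y : y < gb b ->
  m * H y + K y = lb b * Sratio m (K y / H y).
Proof.
move=> yg; have [H0 Hl lK GH GK] := HK_level _ yg.
by apply: Gb_eq_weighted_sum => //; [apply: lt_trans lK | rewrite GH GK].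
Qed.

Lemma weighted_sum_lt m x y : x < gb b -> y < gb b ->
  Sratio m (K x / H x) < Sratio m (K y / H y) -> m * H x + K x < m * H y + K y.
Proof. by move=> xg yg; rewrite !weighted_sum_Sratio // ltr_pM2l // lb_gt0. Qed.

End level_curve.

Theorem lemma5p6 (R : realType) (b : R) (hb : 2 < b) (H K : R -> R)
  (hHK : forall y, y < gb b ->
     [/\ 0 < H y, H y < lb b, lb b < K y, Gb b (H y) = y & Gb b (K y) = y])
  (hHg : H (gb b) = lb b) (hKg : K (gb b) = lb b) :
  (forall x y, x < y -> y <= gb b -> 1 * H y + K y < 1 * H x + K x) /\
  exists gt : R, gt < gb b /\
    (forall x y, x < y -> y < gt -> 2 * H y + K y < 2 * H x + K x) /\
    (forall x y, gt < x -> x < y -> y <= gb b -> 2 * H x + K x < 2 * H y + K y).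
Proof.
have b0 : 0 < b by apply: lt_trans hb.
have top m : m * H (gb b) + K (gb b) = lb b * (m + 1) by rewrite hHg hKg; ring.
have t1 := level_ratio_gt1 hHK; have tdec := level_ratio_decreasing b0 hHK.
have Sw := weighted_sum_Sratio b0 hHK; have Sw_lt := weighted_sum_lt b0 hHK.
split.
  move=> x y xy; rewrite le_eqVlt => /predU1P[yE|yg].
    have xg : x < gb b by rewrite -yE.
    rewrite yE top Sw // ltr_pM2l ?lb_gt0 //.
    by apply: Sratio_gt_succ; rewrite ?ler01 ?lexx ?t1.
  have xg := lt_trans xy yg.
  apply: Sw_lt => //; apply: Sratio_lt_of_num_gt0; rewrite ?t1 ?tdec //.
  move=> z; rewrite in_itv /= => /andP[tz _].
  by apply: Sratio_num_gt0; rewrite ?lexx // (lt_trans (t1 _ yg)).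
have [r] := @Sratio_num2_root R; rewrite in_itv /= => /andP[r2 r4] num_r.
have r21 : 1 <= (2 : R) <= r by apply/andP; split; lra.
have [gt gtg tgt] := level_ratio_surjective b0 hHK r ltac:(lra).
exists gt; split => //; split.
  move=> x y xy ygt; have yg := lt_trans ygt gtg; have xg := lt_trans xy yg.
  apply: Sw_lt => //; apply: Sratio_lt_of_num_gt0; rewrite ?t1 ?tdec //.
  move=> z; rewrite in_itv /= => /andP[tz _].
  apply: (Sratio_num_gt0_above_root 2 r) => //; rewrite -tgt.
  exact: lt_trans (tdec _ _ ygt gtg) tz.
move=> x y gtx xy; rewrite le_eqVlt => /predU1P[yE|yg].
  have xg : x < gb b by rewrite -yE.
  rewrite yE top Sw // ltr_pM2l ?lb_gt0 //.
  apply: Sratio_lt_succ; rewrite ?ler1n ?t1 //.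
  by have := tdec _ _ gtx xg; rewrite tgt expr2; lra.
have xg := lt_trans xy yg.
apply: Sw_lt => //; apply: Sratio_gt_of_num_lt0; rewrite ?t1 ?tdec //.
move=> z; rewrite in_itv /= => /andP[tz zt].
apply: (Sratio_num_lt0_below_root 2 r) => //; rewrite (lt_trans (t1 _ yg)) //=.
by rewrite -tgt (lt_trans zt) // tdec.
Qed.
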